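(* Let $\gamma$ be a separating simple closed curve on a surface $\Sigma$, let $\Sigma'\to\Sigma$ be a finite-sheeted abelian (regular) covering to which $\gamma$ lifts to a closed curve, and let $\gamma'$ be a lift of $\gamma$ to $\Sigma'$. If $\gamma'$ is separating, then the restriction of the covering map $\Sigma'\to\Sigma$ to some component of $\Sigma'\smallsetminus\gamma'$ is a homeomorphism onto its image.
   Context: An abelian covering is a regular covering whose group of deck transformations is abelian. *)

From HB Require Import structures.
From mathcomp Require Import all_boot all_order all_algebra.
From mathcomp Require Import all_classical all_reals all_analysis.
Set Implicit Arguments. Unset Strict Implicit. Unset Printing Implicit Defensive.
Import Order.TTheory GRing.Theory Num.Theory.
Import numFieldNormedType.Exports.
Local Open Scope classical_set_scope.
Local Open Scope ring_scope.

(* f restricted to A is a homeomorphism onto its image f @` A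
   (image carrying the subspace topology). *)
Definition homeo_onto_image {X Y : topologicalType} (f : X -> Y) (A : set X) :=
  [/\ {within A, continuous f},
      {in A &, injective f} &
      forall V : set X, open V ->
        exists W : set Y, open W /\ f @` (A `&` V) = f @` A `&` W].

Definition is_surface (R : realType) (S : topologicalType) :=
  [/\ hausdorff_space S, connected [set: S] &
      forall x : S, exists U : set S, [/\ open U, U x &
        exists f : S -> R * R, homeo_onto_image f U /\ open (f @` U)]].

Definition closed_curve (R : realType) (S : topologicalType) (g : R -> S) :=
  continuous g /\ forall t : R, g (t + 1) = g t.

(* A simple closed curve: closed curve whose parametrization is injective
   modulo 1, i.e. an embedding of the circle R/Z. *)
Definition simple_closed_curve (R : realType) (S : topologicalType) (g : R -> S) :=
  closed_curve g /\
  forall s t : R, g s = g t -> exists k : int, s - t = k%:~R.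

Definition separating (R : realType) (S : topologicalType) (g : R -> S) :=
  ~ connected (~` range g).

Definition covering_map {X Y : topologicalType} (p : X -> Y) :=
  [/\ continuous p, (forall y : Y, exists x : X, p x = y) &
      forall y : Y, exists U : set Y, [/\ open U, U y &
        exists (I : Type) (V : I -> set X),
          [/\ forall i, open (V i),
              forall i j, i <> j -> V i `&` V j = set0,
              p @^-1` U = \bigcup_i V i &
              forall i, homeo_onto_image p (V i) /\ p @` V i = U]]].

Definition finite_sheeted {X Y : topologicalType} (p : X -> Y) :=
  forall y : Y, finite_set (p @^-1` [set y]).

Definition deck {X Y : topologicalType} (p : X -> Y) (h : X -> X) :=
  [/\ continuous h,
      exists g : X -> X, [/\ continuous g, cancel h g & cancel g h] &
      p \o h = p].

Definition regular_covering {X Y : topologicalType} (p : X -> Y) :=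
  covering_map p /\
  forall x1 x2 : X, p x1 = p x2 -> exists h, deck p h /\ h x1 = x2.

Definition abelian_covering {X Y : topologicalType} (p : X -> Y) :=
  regular_covering p /\
  forall h1 h2, deck p h1 -> deck p h2 -> h1 \o h2 = h2 \o h1.

(* The translates [h @` range g'] of the closed lift [g'] by deck
   transformations [h] cover [p @^-1` range g], and two of them are equal or
   disjoint: a deck transformation is determined by one value, and [g] is
   simple.  Each translate separates [S'] like [g'] does.  If a side [A] of a
   translate meets another translate [L'], then the side of [L'] away from the
   first translate lies in [A] and misses the point of [L'] over [g 0]; as the
   fibre over [g 0] is finite, we end with a side [P] of [g'] meeting no
   translate.  Then [p] is injective on [P]: if [x] and [h x] lie in [P] with
   [h <> id], then [P] and [h @` P] are sides of the disjoint curves [g'] and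
   [h \o g'] each avoiding the other curve, hence disjoint in the connected
   space [S'], yet both contain [h x].  As [p] is open, it restricts to a
   homeomorphism on [P] and on every component of [P]. *)

From HB Require Import structures.
From mathcomp Require Import all_boot all_order all_algebra.
From mathcomp Require Import all_classical all_reals all_analysis.
Set Implicit Arguments.
Unset Strict Implicit.
Unset Printing Implicit Defensive.
Import Order.TTheory GRing.Theory Num.Theory.
Local Open Scope classical_set_scope.
Local Open Scope ring_scope.

Lemma count_lt_subpred {T : Type} (a b : pred T) (s : seq T) :
  subpred a b -> has (predD b a) s -> (count a s < count b s)%N.
Proof.
move=> ab; rewrite has_count => pos_ba.
have := count_predUI a (predD b a) s.
rewrite (@eq_count _ (predU a (predD b a)) b); last first.
  by move=> x /=; case: (boolP (a x)) => [/ab ->|] //=; rewrite andbT.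
rewrite (@eq_count _ (predI a (predD b a)) pred0) ?count_pred0 ?addn0; last first.
  by move=> x /=; case: (a x).
by move=> ->; rewrite -[X in (X < _)%N]addn0 ltn_add2l.
Qed.

Definition separation {T : topologicalType} (L X Y : set T) :=
  [/\ open X /\ open Y, X !=set0, Y !=set0, X `&` Y = set0 & X `|` Y = ~` L].

Section Separation.
Context {T : topologicalType}.
Implicit Types L X Y E : set T.

Lemma separation_sym L X Y : separation L X Y -> separation L Y X.
Proof. by case=> [[? ?] ? ? XY XYL]; split=> //; [rewrite setIC|rewrite setUC]. Qed.

Lemma separation_subC L X Y : separation L X Y -> X `<=` ~` L.
Proof. by case=> _ _ _ _ XYL x Xx; rewrite -XYL; left. Qed.

Lemma separation_complement L X Y : separation L X Y -> ~` L `\` Y = X.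
Proof. by case=> _ _ _ XY <-; rewrite setUDK // setIC XY. Qed.

Lemma closure_separation L X Y : separation L X Y -> closure X `<=` X `|` L.
Proof.
move=> sXY x clx; have [[_ oY] _ _ XY _] := sXY.
have [Lx|nLx] := pselect (L x); first by right.
left; rewrite -(separation_complement sXY); split=> // Yx.
have [z [Xz Yz]] := clx Y (open_nbhs_nbhs (conj oY Yx)).
by have : (X `&` Y) z by []; rewrite XY.
Qed.

Lemma connected_separation_sub L X Y E : separation L X Y ->
  connected E -> E `<=` ~` L -> E `&` X !=set0 -> E `<=` X.
Proof.
move=> sXY cE EL EX; have [[oX oY] _ _ _ _] := sXY.
have EXY : E `&` X = E `&` ~` Y.
  rewrite -(separation_complement sXY) setIDA.
  by congr (_ `&` _); apply/setIidl.
have <- := cE (E `&` X) EX (ex_intro2 _ _ X oX erefl)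
  (ex_intro2 _ _ (~` Y) (open_closedC oY) EXY).
by move=> x [].
Qed.

Lemma separation_connected_side L X Y E : separation L X Y ->
  connected E -> E `<=` ~` L -> E !=set0 ->
  exists X' Y', separation L X' Y' /\ E `<=` Y'.
Proof.
move=> sXY cE EL [e Ee]; have [_ _ _ _ XYL] := sXY.
have : (X `|` Y) e by rewrite XYL; exact: EL.
case=> [Xe|Ye].
- exists Y, X; split; first exact: separation_sym.
  by apply: (connected_separation_sub sXY) => //; exists e.
- exists X, Y; split => //.
  by apply: (connected_separation_sub (separation_sym sXY)) => //; exists e.
Qed.

(* [X1 `&` X2] is open, and closed because its closure lies in
   [(X1 `|` L1) `&` (X2 `|` L2) = X1 `&` X2]; as it misses the nonempty [L1],
   connectedness forces it to be empty. *)
Lemma separation_sides_disjoint L1 X1 Y1 L2 X2 Y2 :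
  connected [set: T] -> separation L1 X1 Y1 -> separation L2 X2 Y2 ->
  X1 `<=` ~` L2 -> X2 `<=` ~` L1 -> L1 `&` L2 = set0 -> L1 !=set0 ->
  X1 `&` X2 = set0.
Proof.
move=> cT s1 s2 X1L2 X2L1 L12 [l Ll].
apply: contrapT => /eqP/set0P ne.
have [[oX1 _] _ _ _ _] := s1; have [[oX2 _] _ _ _ _] := s2.
have cl : closure (X1 `&` X2) `<=` X1 `&` X2.
  move=> x clx.
  have /(closure_separation s1) := closureS (@subIsetl _ X1 X2) clx.
  have /(closure_separation s2) := closureS (@subIsetr _ X1 X2) clx.
  case=> [X2x|L2x] [X1x|L1x] //.
  - by have := X2L1 _ X2x.
  - by have := X1L2 _ X1x.
  - by have : (L1 `&` L2) x by []; rewrite L12.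
have X12T : X1 `&` X2 = setT.
  apply: cT => //; first by exists (X1 `&` X2); [exact: openI|rewrite setTI].
  exists (closure (X1 `&` X2)); first exact: closed_closure.
  by rewrite setTI; apply/seteqP; split => //; exact: subset_closure.
have [X1l _] : (X1 `&` X2) l by rewrite X12T.
exact: separation_subC s1 _ X1l Ll.
Qed.

Lemma separation_side_nested L X Y L' X' Y' :
  connected [set: T] -> separation L X Y -> separation L' X' Y' ->
  L `<=` Y' -> L' `<=` X -> L `&` L' = set0 -> L' !=set0 -> X' `<=` X.
Proof.
move=> cT sXY sXY' LY' L'X LL' nL'.
have [_ _ _ /disjoints_subset XY _] := sXY.
have [_ _ _ /disjoints_subset X'Y' _] := sXY'.
have X'L : X' `<=` ~` L by move=> x /X'Y' + /LY'.
have YL' : Y `<=` ~` L' by move=> y Yy /L'X/XY/(_ Yy).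
have L'L : L' `&` L = set0 by rewrite setIC.
have /disjoints_subset X'Y :=
  separation_sides_disjoint cT sXY' (separation_sym sXY) X'L YL' L'L nL'.
by rewrite -(separation_complement sXY) => x X'x; split; [exact: X'L|exact: X'Y].
Qed.

Lemma separation_of_disconnected L : closed L -> ~ connected (~` L) ->
  exists X Y, separation L X Y.
Proof.
move=> cL /connectedPn [E [E0 EU [s1 s2]]].
have open_side (A B : set T) : ~` L = A `|` B -> A `&` closure B = set0 -> open A.
  move=> AB AclB; have -> : A = ~` L `&` ~` closure B.
    apply/seteqP; split=> [x Ax|x [+ nclx]].
      split; first by rewrite AB; left.
      by move=> clx; have : (A `&` closure B) x by []; rewrite AclB.
    by rewrite AB => -[//|Bx]; have := nclx (subset_closure Bx).
  by apply: openI; [exact: closed_openC|exact/closed_openC/closed_closure].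
have oEf := open_side _ _ EU s2.
have oEt : open (E true) by apply: (open_side _ (E false)); [rewrite setUC|rewrite setIC].
exists (E false), (E true); split; [by []|exact: E0|exact: E0| |by rewrite EU].
apply/seteqP; split=> [x [Efx Etx]|//].
have : (closure (E false) `&` E true) x by split => //; apply: subset_closure.
by rewrite s1.
Qed.

End Separation.

Lemma separation_preimage {T U : topologicalType} (f : T -> U) (L X Y : set U) :
  continuous f -> (forall y, exists x, f x = y) -> separation L X Y ->
  separation (f @^-1` L) (f @^-1` X) (f @^-1` Y).
Proof.
move=> cf sf [[oX oY] [x Xx] [y Yy] XY XYL]; split.
- by split; apply/(continuousP _).1.
- by have [x' fx'] := sf x; exists x'; rewrite /preimage /= fx'.
- by have [y' fy'] := sf y; exists y'; rewrite /preimage /= fy'.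
- by rewrite -preimage_setI XY preimage_set0.
- by rewrite -preimage_setU XYL preimage_setC.
Qed.

Section PeriodicCurves.
Context {R : realType} {T : Type}.
Implicit Types f : R -> T.

Lemma periodic_shiftz f : (forall t, f (t + 1) = f t) ->
  forall (k : int) t, f (t + k%:~R) = f t.
Proof.
move=> f1; have fn (n : nat) t : f (t + n%:R) = f t.
  by elim: n t => [|n IHn] t; rewrite ?addr0 // -addn1 natrD addrA f1 IHn.
case=> n t; first exact: fn.
by rewrite NegzE mulrNz -{2}(subrK n.+1%:R t) fn.
Qed.

Lemma periodic_range f : (forall t, f (t + 1) = f t) -> range f = f @` `[0, 1].
Proof.
move=> f1; apply/seteqP; split=> y [t _ <-]; last by exists t.
exists (t - (Num.floor t)%:~R); last by rewrite -mulrNz periodic_shiftz.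
have := floor_itv t; rewrite /= in_itv /= => /andP[tl tu].
by rewrite subr_ge0 tl /= lerBlDl ltW // -[1]/(1%:~R) -rmorphD.
Qed.

Lemma periodic_eq_of_simple {U : Type} (g : R -> U) f s t :
  (forall s t, g s = g t -> exists k : int, s - t = k%:~R) ->
  (forall t, f (t + 1) = f t) -> g s = g t -> f s = f t.
Proof.
by move=> sg f1 /sg [k e]; rewrite -(subrK t s) e addrC periodic_shiftz.
Qed.

End PeriodicCurves.

Lemma closed_curve_range_closed (R : realType) (T : topologicalType) (f : R -> T) :
  hausdorff_space T -> closed_curve f -> closed (range f).
Proof.
move=> hT [cf f1]; rewrite (periodic_range f1).
apply: compact_closed => //; apply: continuous_compact.
  exact: continuous_subspaceT.
exact: segment_compact.
Qed.

Lemma closed_curve_range_connected (R : realType) (T : topologicalType) (f : R -> T) :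
  closed_curve f -> connected (range f).
Proof.
move=> [cf f1]; rewrite (periodic_range f1).
apply: connected_continuous_connected; first exact: segment_connected.
exact: continuous_subspaceT.
Qed.

Lemma open_local {T : topologicalType} (O : set T) :
  (forall x, O x -> exists A, [/\ open A, A x & A `<=` O]) -> open O.
Proof.
move=> Oloc; rewrite openE => x /Oloc [A [oA Ax AO]].
by rewrite /interior nbhsE; exists A.
Qed.

Lemma homeo_onto_image_sub {X Y : topologicalType} (f : X -> Y) (P C : set X) :
  continuous f -> (forall O, open O -> open (f @` O)) -> open P ->
  {in P &, injective f} -> C `<=` P -> homeo_onto_image f C.
Proof.
move=> cf fopen oP finj CP; split.
- exact: continuous_subspaceT.
- by move=> x y /set_mem/CP/mem_set Px /set_mem/CP/mem_set Py; exact: finj.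
- move=> V oV; exists (f @` (P `&` V)); split; first by apply/fopen/openI.
  apply/seteqP; split=> [_ [c [Cc Vc] <-]|_ [[c Cc <-] [q [Pq Vq] fqc]]].
    by split; exists c => //; split => //; exact: CP.
  exists c => //; split => //.
  by rewrite -(finj q c (mem_set Pq) (mem_set (CP c Cc)) fqc).
Qed.

Section DeckTransformations.
Context {X Y : topologicalType} (p : X -> Y).

Lemma covering_map_open : covering_map p -> forall O, open O -> open (p @` O).
Proof.
case=> _ _ ev O oO; apply: open_local => _ [u Ou <-].
have [U [oU Upu [I [V [_ _ pre sheet]]]]] := ev (p u).
have : (p @^-1` U) u by [].
rewrite pre => -[i _ Viu]; have [[_ _ hop] pVi] := sheet i.
have [W [oW eW]] := hop O oO.
exists (U `&` W); split; first exact: openI.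
- by rewrite -pVi -eW; exists u.
- by rewrite -pVi -eW => y [x [_ Ox] <-]; exists x.
Qed.

Lemma deck_proj h x : deck p h -> p (h x) = p x.
Proof. by case=> _ _ ph; rewrite -{2}ph. Qed.

Lemma deck_id : deck p id.
Proof.
have cid : continuous (@id X) by move=> ?.
by split => //; exists id.
Qed.

Lemma deck_inverse h : deck p h -> exists hi, [/\ deck p hi, cancel h hi & cancel hi h].
Proof.
move=> [ch [hi [chi hK hiK]] ph]; exists hi; split => //; split => //.
  by exists h.
apply/funext => y /=.
by have /= := congr1 (fun f => f (hi y)) ph; rewrite hiK => ->.
Qed.

Lemma deck_image_separation h (L A B : set X) : deck p h ->
  separation L A B -> separation (h @` L) (h @` A) (h @` B).
Proof.
move=> [_ [hi [chi hK hiK]] _] sAB.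
have himg (D : set X) : h @` D = hi @^-1` D.
  apply/seteqP; split=> [_ [d Dd <-]|y Dhy]; first by rewrite /preimage /= hK.
  by exists (hi y).
rewrite !himg; apply: separation_preimage => // y.
by exists (h y).
Qed.

(* The set where two deck transformations agree is open (they agree on a
   whole sheet) and closed (X is Hausdorff). *)
Lemma deck_eq h k z : hausdorff_space X -> connected [set: X] -> covering_map p ->
  deck p h -> deck p k -> h z = k z -> h = k.
Proof.
move=> hX cX [_ _ ev] dh dk hkz.
have [ch _ _] := dh; have [ck _ _] := dk.
pose E := [set w | h w = k w].
have oE : open E.
  apply: open_local => w Ew.
  have [U [_ Upw [I [V [oV _ pre sheet]]]]] := ev (p w).
  have : (p @^-1` U) (h w) by rewrite /preimage /= deck_proj.
  rewrite pre => -[j _ Vjhw]; have [[_ pinj _] _] := sheet j.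
  exists (h @^-1` V j `&` k @^-1` V j); split.
  - by apply: openI; apply/(continuousP _).1.
  - by split; rewrite /preimage //= -Ew.
  - move=> u [Vhu Vku]; apply: pinj; rewrite ?inE //.
    by rewrite !deck_proj.
have cE : closed E.
  rewrite -openC; apply: open_local => w /= nEw.
  move: hX; rewrite open_hausdorff => /(_ (h w) (k w)).
  case; first exact/eqP.
  move=> [A B] /= [hA kB] [oA oB /eqP AB].
  exists (h @^-1` A `&` k @^-1` B); split.
  - by apply: openI; apply/(continuousP _).1.
  - by split; rewrite /preimage /=; apply/set_mem.
  - move=> u [Ahu Bku] /= Eu.
    have : (A `&` B) (h u) by split => //; rewrite Eu.
    by rewrite AB.
have ET : E = setT.
  apply: cX; first by exists z.
  - by exists E => //; rewrite setTI.
  - by exists E => //; rewrite setTI.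
by apply/funext => w; have : E w by rewrite ET.
Qed.

End DeckTransformations.

Section ClosedLift.
Variables (R : realType) (X Y : topologicalType) (p : X -> Y).
Variables (g : R -> Y) (g' : R -> X).
Hypotheses (hausX : hausdorff_space X) (connX : connected [set: X])
  (covp : covering_map p)
  (regp : forall x1 x2 : X, p x1 = p x2 -> exists h, deck p h /\ h x1 = x2)
  (simple_g : forall s t : R, g s = g t -> exists k : int, s - t = k%:~R)
  (closed_g' : closed_curve g') (lift_g' : p \o g' = g).

Local Notation curve_preimage := (p @^-1` range g).

Lemma lift_proj t : p (g' t) = g t.
Proof. by rewrite -lift_g'. Qed.

Lemma lift_range_sub : range g' `<=` curve_preimage.
Proof. by move=> _ [t _ <-]; exists t; rewrite ?lift_proj. Qed.

Lemma deck_curve_preimage h x : deck p h -> curve_preimage (h x) = curve_preimage x.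
Proof. by move=> dh; rewrite /preimage /= deck_proj. Qed.

Lemma translate_sub_preimage h : deck p h -> h @` range g' `<=` curve_preimage.
Proof.
by move=> dh _ [x gx <-]; rewrite deck_curve_preimage //; exact: lift_range_sub.
Qed.

Lemma translate_connected h : deck p h -> connected (h @` range g').
Proof.
move=> [ch _ _]; apply: connected_continuous_connected.
  exact: closed_curve_range_connected.
exact: continuous_subspaceT.
Qed.

Lemma preimage_sub_translates w :
  curve_preimage w -> exists h, deck p h /\ (h @` range g') w.
Proof.
move=> [t _ gtw].
have [h [dh hw]] : exists h, deck p h /\ h (g' t) = w.
  by apply: regp; rewrite lift_proj.
by exists h; split => //; exists (g' t).
Qed.

(* Since [g] is simple, [h (g' a) = k (g' b)] forces [g' a = g' b]. *)
Lemma translate_meet_eq h k w : deck p h -> deck p k ->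
  (h @` range g') w -> (k @` range g') w -> h = k.
Proof.
move=> dh dk [_ [a _ <-] <-] [_ [b _ <-]] hkab.
apply: (deck_eq (z := g' a) hausX connX covp dh dk); rewrite -hkab; congr k.
apply: (periodic_eq_of_simple simple_g closed_g'.2).
by rewrite -!lift_proj -(deck_proj (g' b) dk) hkab deck_proj.
Qed.

Lemma translates_disjoint h k : deck p h -> deck p k -> h <> k ->
  h @` range g' `&` k @` range g' = set0.
Proof.
move=> dh dk hk; apply/disjoints_subset => w Lw Kw.
exact/hk/(translate_meet_eq dh dk Lw Kw).
Qed.

Lemma clean_side_injective P Q : separation (range g') P Q ->
  P `<=` ~` curve_preimage -> {in P &, injective p}.
Proof.
move=> sPQ Pclean x1 x2 /set_mem Px1 /set_mem Px2 /regp [h [dh hx12]].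
have [hid|hid] := pselect (h = id); first by rewrite -hx12 hid.
have L0 : range g' !=set0 by exists (g' 0), 0.
have L0h : range g' `&` h @` range g' = set0.
  rewrite -[X in X `&` _]image_id translates_disjoint //; first exact: deck_id.
  by move=> /esym.
have PL : P `<=` ~` (h @` range g').
  by move=> v /Pclean + /(translate_sub_preimage dh).
have hPL0 : h @` P `<=` ~` range g'.
  move=> _ [a Pa <-] /lift_range_sub.
  by rewrite deck_curve_preimage //; exact: Pclean.
have /disjoints_subset PhP := separation_sides_disjoint connX sPQ
  (deck_image_separation dh sPQ) PL hPL0 L0h L0.
by exfalso; apply: (PhP _ Px2); rewrite -hx12; exists x1.
Qed.

Variables P0 Q0 : set X.
Hypothesis sepP0Q0 : separation (range g') P0 Q0.

(* A side [A] of a translate that meets the preimage of [g] contains a whole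
   translate [L']; the side of [L'] away from the first translate lies in [A]
   and misses the point of [L'] over [g 0]. *)
Lemma separation_shrink h A B : deck p h -> separation (h @` range g') A B ->
  A `&` curve_preimage !=set0 ->
  exists h' A' B', [/\ deck p h', separation (h' @` range g') A' B', A' `<=` A &
    exists v, [/\ p v = g 0, A v & ~ A' v]].
Proof.
move=> dh sAB [w [Aw /preimage_sub_translates [h' [dh' L'w]]]].
have LL' : h @` range g' `&` h' @` range g' = set0.
  apply: translates_disjoint => // hh'.
  by apply: (separation_subC sAB Aw); rewrite hh'.
have L'L : h' @` range g' `<=` ~` (h @` range g').
  by apply/disjoints_subset; rewrite setIC.
have L'A : h' @` range g' `<=` A.
  apply: (connected_separation_sub sAB (translate_connected dh') L'L).
  by exists w.
have [A' [B' [sA'B' LB']]] :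
    exists A' B', separation (h' @` range g') A' B' /\ h @` range g' `<=` B'.
  apply: separation_connected_side (deck_image_separation dh' sepP0Q0)
    (translate_connected dh) _ _.
  - by apply/disjoints_subset.
  - by exists (h (g' 0)), (g' 0) => //; exists 0.
have L'g'0 : (h' @` range g') (h' (g' 0)) by exists (g' 0) => //; exists 0.
exists h', A', B'; split => //.
  apply: (separation_side_nested connX sAB sA'B' LB' L'A LL').
  by exists (h' (g' 0)).
exists (h' (g' 0)); split; first by rewrite deck_proj // lift_proj.
  exact: L'A L'g'0.
by move=> A'v; exact: separation_subC sA'B' _ A'v L'g'0.
Qed.

Lemma clean_separation : finite_set (p @^-1` [set g 0]) ->
  exists P Q, separation (range g') P Q /\ P `<=` ~` curve_preimage.
Proof.
move=> /finite_seqP [s fibre].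
pose over_g0 (A : set X) := count (fun v => `[< A v >]) s.
suff [h [A [B [dh sAB Aclean]]]] : exists h A B, [/\ deck p h,
    separation (h @` range g') A B & A `<=` ~` curve_preimage].
  have [hi [dhi hK _]] := deck_inverse dh.
  exists (hi @` A), (hi @` B); split.
    have := deck_image_separation dhi sAB.
    by rewrite image_comp (_ : hi \o h = id) ?image_id //; apply/funext.
  by move=> _ [a Aa <-]; rewrite /setC /preimage /= deck_proj //; exact: Aclean.
have sep0 : separation (id @` range g') P0 Q0 by rewrite image_id.
have [n] := ubnP (over_g0 P0).
elim: n (@id X) P0 Q0 (deck_id p) sep0 => // n IH h A B dh sAB ltAn.
have [meet|clean] := pselect (A `&` curve_preimage !=set0); last first.
  by exists h, A, B; split => // a Aa Ga; apply: clean; exists a.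
have [h' [A' [B' [dh' sA'B' A'A [v [pv Av nA'v]]]]]] := separation_shrink dh sAB meet.
apply: (IH h' A' B') => //; rewrite -ltnS (leq_trans _ ltAn) // ltnS.
apply: count_lt_subpred => [x /asboolP/A'A/asboolP //|].
apply/hasP; exists v; first by have : [set` s] v by rewrite -fibre.
by apply/andP; split; [apply/asboolPn|apply/asboolP].
Qed.
End ClosedLift.

Unset Implicit Arguments.
Theorem lemma3p4 (R : realType) (S S' : topologicalType) (p : S' -> S)
  (g : R -> S) (g' : R -> S') :
  is_surface R S -> is_surface R S' ->
  simple_closed_curve g -> separating g ->
  abelian_covering p -> finite_sheeted p ->
  closed_curve g' -> p \o g' = g ->
  separating g' ->
  exists x : S', ~ range g' x /\
    homeo_onto_image p (connected_component (~` range g') x).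
Proof.
move=> _ [hausS' connS' _] [_ simple_g] _ [[covp regp] _] fin closed_g' lift_g' sep_g'.
have [P0 [Q0 sP0Q0]] :=
  separation_of_disconnected (closed_curve_range_closed hausS' closed_g') sep_g'.
have [P [Q [sPQ Pclean]]] := clean_separation hausS' connS' covp regp simple_g
  closed_g' lift_g' sP0Q0 (fin (g 0)).
have [[oP _] [x Px] _ _ _] := sPQ.
exists x; split; first exact: separation_subC sPQ _ Px.
have [contp _ _] := covp.
apply: (homeo_onto_image_sub contp (covering_map_open covp) oP).
- exact: (clean_side_injective hausS' connS' covp regp simple_g closed_g' lift_g' sPQ Pclean).
- apply: (connected_separation_sub sPQ (@component_connected _ _ x)).
    exact: connected_component_sub.
  exists x; split => //; apply: connected_component_refl.
  exact: separation_subC sPQ _ Px.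
Qed.
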